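(* Let $n\ge0$ and $k\ge1$. For every formula $\alpha$: if $\vdash_{L_n^k}\alpha$ then $\vDash_{\mathcal{R}_n^k}\alpha$.
   Context: Formulas are built from a countable set of propositional variables using unary $\neg,\circ$ and binary $\land,\lor,\to$; $\circ^0\alpha=\alpha$, $\circ^{m+1}\alpha=\circ(\circ^m\alpha)$, $\alpha\leftrightarrow\beta:=(\alpha\to\beta)\land(\beta\to\alpha)$. mbC is the Hilbert calculus with the axiom schemas of a standard axiomatization of positive classical propositional logic in $\land,\lor,\to$, plus (TND) $\alpha\lor\neg\alpha$ and (bc1) $\circ\alpha\to(\alpha\to(\neg\alpha\to\beta))$, modus ponens being the only rule; mbCciw is mbC plus (ciw) $\circ\alpha\lor(\alpha\land\neg\alpha)$. For $n\ge0$, $k\ge1$, $L_n^k$ is mbCciw plus (cc$^n$) $\circ^{n+2}\alpha$, (dn) $\neg\neg\alpha\leftrightarrow\alpha$, and (ip$^j$) $\neg\circ^j\neg\alpha\leftrightarrow\neg\circ^j\alpha$ for each $1\le j<k$. $\mathcal{M}_1$ is the three-valued Nmatrix with values $T,t,F$, designated set $D=\{T,t\}$, and: $\neg T=\{F\}$, $\neg t=\{t\}$, $\neg F=\{T\}$; $\circ T=\circ F=\{T,t\}$, $\circ t=\{F\}$; $x\land y=\{T,t\}$ if $x,y\in D$ else $\{F\}$; $x\lor y=\{T,t\}$ if $x\in D$ or $y\in D$ else $\{F\}$; $x\to y=\{T,t\}$ if $x\notin D$ or $y\in D$ else $\{F\}$. A valuation over $\mathcal{M}_1$ is a map $\vartheta$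 from formulas to $\{T,t,F\}$ respecting these multioperations (the value of a compound is in the set assigned to the values of its components). $\mathcal{F}_n^k$ is the set of valuations $\vartheta$ over $\mathcal{M}_1$ such that for every formula $\alpha$: (vCc$^n$) if $\vartheta(\circ^n\alpha)\in\{T,F\}$ then $\vartheta(\circ^{n+1}\alpha)=T$; and (vip$^j$) $\vartheta(\circ^j\alpha)=\vartheta(\circ^j\neg\alpha)$ for each $1\le j\le k-1$. $\mathcal{R}_n^k=\langle\mathcal{M}_1,\mathcal{F}_n^k\rangle$, and $\vDash_{\mathcal{R}_n^k}\alpha$ means $\vartheta(\alpha)\in D$ for all $\vartheta\in\mathcal{F}_n^k$. *)

From Stdlib Require Import Arith.

Inductive formula : Type :=
| Var  : nat -> formula
| Neg  : formula -> formula
| Circ : formula -> formula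
| And  : formula -> formula -> formula
| Or   : formula -> formula -> formula
| Imp  : formula -> formula -> formula.

Fixpoint circn (m : nat) (a : formula) : formula :=
  match m with
  | 0 => a
  | S m' => Circ (circn m' a)
  end.

Definition Iff (a b : formula) : formula := And (Imp a b) (Imp b a).

(** The Hilbert calculus L_n^k: the standard mbC axiomatization
    (Ax1-Ax9 for positive classical logic, TND, bc1), plus ciw, cc^n,
    dn, and ip^j for 1 <= j < k; modus ponens is the only rule. *)
Inductive Lnk_prov (n k : nat) : formula -> Prop :=
| Ax1 a b : Lnk_prov n k (Imp a (Imp b a))
| Ax2 a b c : Lnk_prov n k (Imp (Imp a b) (Imp (Imp a (Imp b c)) (Imp a c)))
| Ax3 a b : Lnk_prov n k (Imp a (Imp b (And a b)))
| Ax4 a b : Lnk_prov n k (Imp (And a b) a)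
| Ax5 a b : Lnk_prov n k (Imp (And a b) b)
| Ax6 a b : Lnk_prov n k (Imp a (Or a b))
| Ax7 a b : Lnk_prov n k (Imp b (Or a b))
| Ax8 a b c : Lnk_prov n k (Imp (Imp a c) (Imp (Imp b c) (Imp (Or a b) c)))
| Ax9 a b : Lnk_prov n k (Or a (Imp a b))
| AxTND a : Lnk_prov n k (Or a (Neg a))
| Axbc1 a b : Lnk_prov n k (Imp (Circ a) (Imp a (Imp (Neg a) b)))
| Axciw a : Lnk_prov n k (Or (Circ a) (And a (Neg a)))
| Axcc a : Lnk_prov n k (circn (n + 2) a)
| Axdn a : Lnk_prov n k (Iff (Neg (Neg a)) a)
| Axip j a : 1 <= j -> j < k ->
    Lnk_prov n k (Iff (Neg (circn j (Neg a))) (Neg (circn j a)))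
| MP a b : Lnk_prov n k a -> Lnk_prov n k (Imp a b) -> Lnk_prov n k b.

Inductive V3 : Type := VT | Vt | VF.

Definition designated (x : V3) : Prop := x = VT \/ x = Vt.

(** The multioperations of M_1, as membership predicates. *)
Definition neg_m (x y : V3) : Prop :=
  match x with
  | VT => y = VF
  | Vt => y = Vt
  | VF => y = VT
  end.

Definition circ_m (x y : V3) : Prop :=
  match x with
  | Vt => y = VF
  | _ => designated y
  end.

Definition and_m (x z y : V3) : Prop :=
  (designated x /\ designated z -> designated y) /\
  (~ (designated x /\ designated z) -> y = VF).

Definition or_m (x z y : V3) : Prop :=
  ((designated x \/ designated z) -> designated y) /\
  (~ (designated x \/ designated z) -> y = VF).

Definition imp_m (x z y : V3) : Prop :=
  ((~ designated x \/ designated z) -> designated y) /\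
  (~ (~ designated x \/ designated z) -> y = VF).

Definition M1_valuation (v : formula -> V3) : Prop :=
  forall a b : formula,
    neg_m (v a) (v (Neg a)) /\
    circ_m (v a) (v (Circ a)) /\
    and_m (v a) (v b) (v (And a b)) /\
    or_m (v a) (v b) (v (Or a b)) /\
    imp_m (v a) (v b) (v (Imp a b)).

Definition in_Fnk (n k : nat) (v : formula -> V3) : Prop :=
  M1_valuation v /\
  (forall a : formula,
     (v (circn n a) = VT \/ v (circn n a) = VF) -> v (circn (S n) a) = VT) /\
  (forall (j : nat) (a : formula), 1 <= j -> j <= k - 1 ->
     v (circn j a) = v (circn j (Neg a))).

Definition Rnk_valid (n k : nat) (a : formula) : Prop :=
  forall v : formula -> V3, in_Fnk n k v -> designated (v a).

(* Soundness: every axiom of L_n^k takes a designated value under every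
   valuation of F_n^k, and modus ponens preserves designation because a
   designated implication with designated antecedent has a designated
   consequent.  The axioms of mbCciw and dn hold in every M_1-valuation;
   cc^n holds by the restriction (vCc^n) and ip^j by (vip^j). *)
From Stdlib Require Import Lia.

Lemma designated_dec (x : V3) : designated x \/ ~ designated x.
Proof. unfold designated; destruct x; intuition discriminate. Qed.

Lemma VF_not_designated : ~ designated VF.
Proof. now intros [E | E]. Qed.

Section M1Valuation.

Variable v : formula -> V3.
Hypothesis Hv : M1_valuation v.

Lemma designated_And (a b : formula) :
  designated (v (And a b)) <-> designated (v a) /\ designated (v b).
Proof.
  destruct (Hv a b) as (_ & _ & [Hdes HF] & _).
  split; [| exact Hdes].
  intros Hab; destruct (designated_dec (v a)), (designated_dec (v b)); auto;
    rewrite HF in Hab by tauto; now destruct (VF_not_designated Hab).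
Qed.

Lemma designated_Or (a b : formula) :
  designated (v (Or a b)) <-> designated (v a) \/ designated (v b).
Proof.
  destruct (Hv a b) as (_ & _ & _ & [Hdes HF] & _).
  split; [| exact Hdes].
  intros Hab; destruct (designated_dec (v a)), (designated_dec (v b)); auto;
    rewrite HF in Hab by tauto; now destruct (VF_not_designated Hab).
Qed.

Lemma designated_Imp (a b : formula) :
  designated (v (Imp a b)) <-> (designated (v a) -> designated (v b)).
Proof.
  destruct (Hv a b) as (_ & _ & _ & _ & [Hdes HF]).
  split.
  - intros Hab Ha; destruct (designated_dec (v b)) as [| Hb]; auto.
    rewrite HF in Hab by tauto; now destruct (VF_not_designated Hab).
  - intros Hab; apply Hdes; destruct (designated_dec (v a)); auto.
Qed.

Lemma v_Neg (a : formula) :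
  v (Neg a) = match v a with VT => VF | Vt => Vt | VF => VT end.
Proof. destruct (Hv a a) as (Hneg & _); unfold neg_m in Hneg; now destruct (v a). Qed.

Lemma v_Circ (a : formula) : circ_m (v a) (v (Circ a)).
Proof. now destruct (Hv a a) as (_ & Hcirc & _). Qed.

Lemma designated_Iff_of_eq (a b : formula) : v a = v b -> designated (v (Iff a b)).
Proof. intros E; unfold Iff; rewrite designated_And, !designated_Imp, E; tauto. Qed.

Lemma Ax9_designated (a b : formula) : designated (v (Or a (Imp a b))).
Proof.
  rewrite designated_Or, designated_Imp.
  destruct (designated_dec (v a)); tauto.
Qed.

Lemma TND_designated (a : formula) : designated (v (Or a (Neg a))).
Proof. rewrite designated_Or, v_Neg; unfold designated; destruct (v a); auto. Qed.

Lemma bc1_designated (a b : formula) :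
  designated (v (Imp (Circ a) (Imp a (Imp (Neg a) b)))).
Proof.
  rewrite !designated_Imp, v_Neg.
  pose proof (v_Circ a) as Hcirc; unfold circ_m, designated in *.
  destruct (v a); intuition congruence.
Qed.

Lemma ciw_designated (a : formula) :
  designated (v (Or (Circ a) (And a (Neg a)))).
Proof.
  rewrite designated_Or, designated_And, v_Neg.
  pose proof (v_Circ a) as Hcirc; unfold circ_m, designated in *.
  destruct (v a); intuition congruence.
Qed.

Lemma dn_designated (a : formula) : designated (v (Iff (Neg (Neg a)) a)).
Proof. apply designated_Iff_of_eq; rewrite !v_Neg; now destruct (v a). Qed.

End M1Valuation.

Section RestrictedValuation.

Variables n k : nat.
Variable v : formula -> V3.
Hypothesis Hvk : in_Fnk n k v.

(* If v(circ^n a) = t then circ^(n+1) a gets F, whose circle is designated;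
   otherwise (vCc^n) makes circ^(n+1) a get T. *)
Lemma cc_designated (a : formula) : designated (v (circn (n + 2) a)).
Proof.
  destruct Hvk as (Hv & Hcc & _).
  specialize (Hcc a); simpl in Hcc.
  replace (n + 2) with (S (S n)) by lia; simpl.
  pose proof (v_Circ v Hv (circn n a)) as Hcirc1.
  pose proof (v_Circ v Hv (Circ (circn n a))) as Hcirc2.
  unfold circ_m in Hcirc1.
  destruct (v (circn n a)).
  - now rewrite (Hcc (or_introl eq_refl)) in Hcirc2.
  - now rewrite Hcirc1 in Hcirc2.
  - now rewrite (Hcc (or_intror eq_refl)) in Hcirc2.
Qed.

Lemma ip_designated (j : nat) (a : formula) :
  1 <= j -> j < k -> designated (v (Iff (Neg (circn j (Neg a))) (Neg (circn j a)))).
Proof.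
  destruct Hvk as (Hv & _ & Hip); intros Hj Hjk.
  apply (designated_Iff_of_eq v Hv).
  rewrite !(v_Neg v Hv), <- (Hip j a) by lia.
  reflexivity.
Qed.

End RestrictedValuation.

Theorem theorem25 (n k : nat) (Hk : 1 <= k) (a : formula) :
  Lnk_prov n k a -> Rnk_valid n k a.
Proof.
  intros Hprov v Hvk.
  pose proof Hvk as (Hv & _).
  induction Hprov.
  1-8: repeat first [ rewrite (designated_Imp v Hv)
                    | rewrite (designated_And v Hv)
                    | rewrite (designated_Or v Hv) ]; tauto.
  - exact (Ax9_designated v Hv a b).
  - exact (TND_designated v Hv a).
  - exact (bc1_designated v Hv a b).
  - exact (ciw_designated v Hv a).
  - exact (cc_designated n k v Hvk a).
  - exact (dn_designated v Hv a).
  - now apply (ip_designated n k v Hvk).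
  - now apply (designated_Imp v Hv a b).
Qed.
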